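(* Let $p$ be an odd prime. The family $\{1+p^n\mathbb{N}_0:n\in\mathbb{N}\}$ coincides with the set of ${\uparrow}$-chain elements of the poset $\mathcal{X}_p$ (and this set is linearly ordered).
   Context: $\mathbb{N}=\{1,2,\dots\}$, $\mathbb{N}_0=\{0\}\cup\mathbb{N}$, $x^{\mathbb{N}}=\{x^k:k\in\mathbb{N}\}$. $\mathcal{X}_p=\{\overline{a^{\mathbb{N}}}:a\in\mathbb{N}\setminus p\mathbb{N},\ a\ne1\}$, closures taken in the $p$-adic topology on $\mathbb{N}\setminus p\mathbb{N}$ (generated by the sets $x+p^m\mathbb{N}_0$, $x,m\in\mathbb{N}$), partially ordered by reverse inclusion: $X\le Y$ iff $Y\subseteq X$. An element $t$ of a poset $(P,\le)$ is a ${\uparrow}$-chain element if its upper set ${\uparrow}t=\{x\in P:x\ge t\}$ is a chain (any two elements are comparable). *)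

From mathcomp Require Import all_boot.
From Stdlib Require Import List.
Set Implicit Arguments. Unset Strict Implicit. Unset Printing Implicit Defensive.

Definition subset_nat := nat -> Prop.

Definition NnotpN (p : nat) : subset_nat := fun x => 0 < x /\ ~~ (p %| x).

Definition coset (p x m : nat) : subset_nat := fun z => exists k, z = x + p ^ m * k.

(* p-adic topology on N \ pN, generated (as a subbasis) by the sets
   (x + p^m N_0) ∩ (N \ pN), x, m ∈ N: U is open iff U ⊆ N\pN and every
   point of U lies in a finite intersection of generating sets contained in U
   (the empty intersection being the whole space N \ pN). *)
Definition padic_open (p : nat) (U : subset_nat) : Prop :=
  (forall x, U x -> NnotpN p x) /\
  forall x, U x -> exists l : list (nat * nat),
    (forall ym, In ym l -> 0 < ym.1 /\ 0 < ym.2) /\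
    (forall ym, In ym l -> coset p ym.1 ym.2 x) /\
    (forall z, NnotpN p z -> (forall ym, In ym l -> coset p ym.1 ym.2 z) -> U z).

Definition padic_closure (p : nat) (S : subset_nat) : subset_nat :=
  fun x => NnotpN p x /\
    forall U, padic_open p U -> U x -> exists s, U s /\ S s.

Definition powers (a : nat) : subset_nat := fun z => exists k, 0 < k /\ z = a ^ k.

Definition Xp (p : nat) (X : subset_nat) : Prop :=
  exists a, NnotpN p a /\ a <> 1 /\ X = padic_closure p (powers a).

Definition Xle (X Y : subset_nat) : Prop := forall z, Y z -> X z.

Definition up_chain_element {T : Type} (P : T -> Prop) (le : T -> T -> Prop) (t : T) : Prop :=
  P t /\ forall x y, P x -> P y -> le t x -> le t y -> le x y \/ le y x.

From mathcomp Require Import all_boot cyclic zify.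
From Stdlib Require Import List FunctionalExtensionality PropExtensionality.
Set Implicit Arguments. Unset Strict Implicit. Unset Printing Implicit Defensive.

(* The closure of a^N is the set of x with x = a^k (mod p^M) for every M;
   by Euler's theorem k can always be taken large.  If a = 1 + p^n u with
   p not dividing u and p odd, then a^(p^i) = 1 + p^(n+i) w with p not
   dividing w, and a Hensel-type induction shows that the powers of a exhaust
   1 + p^n Z modulo every p^M, so the closure is 1 + p^n N_0.  These cosets
   form a chain, and every element of X_p above 1 + p^n N_0 is again such a
   coset, so the cosets are up-chain elements.  If a <> 1 (mod p), the
   closures of a^p and b = a^(p-1) both lie above that of a but are
   incomparable: a^p = a <> 1 = b^k (mod p), and if p^n exactly divides
   b - 1, then b = y^p (mod p^(n+1)) with y^(p-1) = b^k = 1 (mod p^n) forces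
   y = 1 (mod p^n), hence b = 1 (mod p^(n+1)). *)

Lemma eqn1_mod_dvd d x : 0 < x -> (x == 1 %[mod d]) = (d %| x.-1).
Proof. by move=> x_gt0; rewrite eqn_mod_dvd // subn1. Qed.

Lemma eq_mod_expn_leq p m M x y :
  m <= M -> x = y %[mod p ^ M] -> x = y %[mod p ^ m].
Proof.
move=> le_mM xy; have dvd_pm := dvdn_exp2l p le_mM.
by rewrite -(modn_dvdm x dvd_pm) xy modn_dvdm.
Qed.

Lemma expn_gt1 a e : 1 < a -> 0 < e -> 1 < a ^ e.
Proof. by move=> a_gt1 e_gt0; apply: leq_trans a_gt1 (leq_pexp2l (ltnW a_gt1) e_gt0). Qed.

Lemma eq1_mod_gt0 d x : 1 < d -> x = 1 %[mod d] -> 0 < x.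
Proof. by move=> d_gt1; case: x => // /esym; rewrite mod0n modn_small. Qed.

Lemma NnotpN_gt1 p a : NnotpN p a -> a <> 1 -> 1 < a.
Proof. by move=> [a_gt0 _] a_neq1; rewrite ltn_neqAle a_gt0 andbT eq_sym; apply/eqP. Qed.

Lemma eq1_mod_ndvd p x : 1 < p -> x = 1 %[mod p] -> ~~ (p %| x).
Proof. by move=> p_gt1 x1; rewrite /dvdn x1 modn_small. Qed.

Lemma expn_totient_addn_mod a m k t :
  coprime a m -> a ^ (k + t * totient m) = a ^ k %[mod m].
Proof.
move=> co_am; rewrite expnD (mulnC t) expnM -modnMmr -modnXm Euler_exp_totient //.
by rewrite modnXm exp1n modnMmr muln1.
Qed.

Lemma coprime_mul_mod_solvable c m D :
  0 < m -> coprime c m -> exists j, j * c = D %[mod m].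
Proof.
move=> m_gt0 co_cm; exists (D * c ^ (totient m).-1).
rewrite -mulnA -expnSr prednK ?totient_gt0 //.
by rewrite -modnMmr Euler_exp_totient // modnMmr muln1.
Qed.

Lemma eq_mod_lift r x d e :
  0 < d -> 0 < e -> r = x %[mod d] -> exists D, x = r + D * d %[mod e * d].
Proof.
move=> d_gt0 e_gt0 rx; set y := x + e * d * r.
have le_ry : r <= y by rewrite (leq_trans _ (leq_addl _ _)) // leq_pmull ?muln_gt0 ?e_gt0.
have yx : y = x %[mod e * d] by rewrite /y addnC mulnC modnMDl.
have dvd_yr : d %| y - r.
  by rewrite -eqn_mod_dvd // /y mulnAC addnC modnMDl rx.
by exists ((y - r) %/ d); rewrite divnK // subnKC // yx.
Qed.

Lemma geometric_sum_mod d x m : x = 1 %[mod d] -> \sum_(i < m) x ^ i = m %[mod d].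
Proof.
move=> x1; rewrite -modn_summ (eq_bigr (fun _ => 1 %% d)); last first.
  by move=> i _; rewrite -modnXm x1 modnXm exp1n.
by rewrite modn_summ sum1_card card_ord.
Qed.

Lemma binomial_first_order_mod q w j : (1 + q * w) ^ j = 1 + j * q * w %[mod q ^ 2].
Proof.
elim: j => [|j IH]; first by rewrite mul0n addn0.
rewrite expnS -modnMmr IH modnMmr.
have -> : (1 + q * w) * (1 + j * q * w) = (j * w * w) * q ^ 2 + (1 + j.+1 * q * w).
  rewrite expnS expn1; nia.
by rewrite modnMDl.
Qed.

Lemma geometric_sum_mod_sq p w : odd p -> \sum_(i < p) (1 + p * w) ^ i = p %[mod p ^ 2].
Proof.
move=> p_odd; rewrite -modn_summ.
rewrite (eq_bigr (fun i : 'I_p => (1 + i * p * w) %% p ^ 2)); last first.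
  by move=> i _; rewrite binomial_first_order_mod.
rewrite modn_summ big_split /= sum1_card card_ord -big_distrl -big_distrl /=.
rewrite -(big_mkord xpredT id) bin2_sum bin2odd //.
have -> : p * (p.-1)./2 * p * w = ((p.-1)./2 * w) * p ^ 2 by rewrite expnS expn1; nia.
by rewrite addnC modnMDl.
Qed.

Section PrimeLifting.

Variable p : nat.
Hypothesis p_pr : prime p.

Let p_gt0 : 0 < p := prime_gt0 p_pr.
Let p_gt1 : 1 < p := prime_gt1 p_pr.

Lemma fermat_little_pred a : ~~ (p %| a) -> a ^ p.-1 = 1 %[mod p].
Proof.
by move=> p'a; rewrite -(totient_prime p_pr) Euler_exp_totient // coprime_sym prime_coprime.
Qed.

Lemma expn_coprime_eq1_mod x m j :
  x = 1 %[mod p] -> ~~ (p %| m) -> x ^ m = 1 %[mod p ^ j] -> x = 1 %[mod p ^ j].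
Proof.
move=> x1 p'm /eqP xm1; apply/eqP; have x_gt0 := eq1_mod_gt0 p_gt1 x1.
move: xm1; rewrite !eqn1_mod_dvd ?expn_gt0 ?x_gt0 // predn_exp Gauss_dvdl //.
by apply: coprimeXl; rewrite prime_coprime // /dvdn (geometric_sum_mod m x1).
Qed.

Lemma expn_prime_eq1_mod x j :
  0 < j -> x = 1 %[mod p ^ j] -> x ^ p = 1 %[mod p ^ j.+1].
Proof.
move=> j_gt0 /eqP xj; apply/eqP.
have x1 : x = 1 %[mod p] by rewrite -(expn1 p) (eq_mod_expn_leq j_gt0 (eqP xj)).
have x_gt0 := eq1_mod_gt0 p_gt1 x1.
move: xj; rewrite !eqn1_mod_dvd ?expn_gt0 ?x_gt0 // predn_exp expnSr => dvd_x.
by rewrite dvdn_mul // /dvdn (geometric_sum_mod p x1) modnn.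
Qed.

Lemma pth_power_eq1_mod y b n :
  0 < n -> y ^ p = b %[mod p ^ n.+1] -> b = 1 %[mod p ^ n] ->
  y ^ p.-1 = 1 %[mod p ^ n] -> b = 1 %[mod p ^ n.+1].
Proof.
move=> n_gt0 yb b1 y1.
have b1p : b = 1 %[mod p] by rewrite -(expn1 p) (eq_mod_expn_leq n_gt0 b1).
have y1p : y = 1 %[mod p].
  by rewrite -(fermat_little y p_pr) -(expn1 p) (eq_mod_expn_leq (ltn0Sn n) yb) expn1.
have p'p1 : ~~ (p %| p.-1) by rewrite gtnNdvd // -ltnS prednK ?prime_gt0.
by rewrite -yb expn_prime_eq1_mod // (expn_coprime_eq1_mod y1p p'p1 y1).
Qed.

Lemma prime_ndvd_1addn n u : 0 < n -> ~~ (p %| 1 + p ^ n * u).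
Proof.
move=> n_gt0; apply: eq1_mod_ndvd => //.
by rewrite -(prednK n_gt0) expnS -mulnA addnC mulnC modnMDl.
Qed.

Lemma powers_lift_step M r w x : 0 < M -> ~~ (p %| r) -> ~~ (p %| w) ->
  r = x %[mod p ^ M] -> exists j, r * (1 + p ^ M * w) ^ j = x %[mod p ^ M.+1].
Proof.
move=> M_gt0 p'r p'w rx; have pM_gt0 : 0 < p ^ M by rewrite expn_gt0 p_gt0.
have [D xD] := eq_mod_lift pM_gt0 p_gt0 rx.
have co_rw_p : coprime (r * w) p.
  by rewrite coprime_sym prime_coprime // Euclid_dvdM // negb_or p'r.
have [j jD] := coprime_mul_mod_solvable D p_gt0 co_rw_p.
have sq_M : p ^ M.+1 %| (p ^ M) ^ 2 by rewrite -expnM; apply: dvdn_exp2l; lia.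
(* Modulo p^(M+1), (1 + p^M w)^j = 1 + j p^M w, so j is chosen with j r w = D (mod p). *)
exists j; rewrite expnS xD -expnS -modnMmr.
rewrite -(modn_dvdm ((1 + p ^ M * w) ^ j) sq_M) binomial_first_order_mod.
rewrite (modn_dvdm _ sq_M) modnMmr.
have -> : r * (1 + j * p ^ M * w) = r + j * (r * w) * p ^ M by nia.
by rewrite -modnDmr expnS -muln_modl jD muln_modl modnDmr.
Qed.

Hypothesis p_odd : odd p.

Lemma expn_prime_1addn j w : 0 < j -> ~~ (p %| w) ->
  exists2 w', (1 + p ^ j * w) ^ p = 1 + p ^ j.+1 * w' & ~~ (p %| w').
Proof.
move=> j_gt0 p'w; set x := 1 + p ^ j * w; set S := \sum_(i < p) x ^ i.
have [s def_S s1] : exists2 s, S = p * s & s = 1 %[mod p].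
  have Sp : S = p %[mod p ^ 2].
    by rewrite /S /x -(prednK j_gt0) expnS -mulnA geometric_sum_mod_sq.
  exists (S %/ p ^ 2 * p + 1); last by rewrite modnMDl.
  by rewrite {1}(divn_eq S (p ^ 2)) Sp modn_small ?expnS ?expn1 ?ltn_Pmull //; nia.
exists (w * s); last by rewrite Euclid_dvdM // negb_or p'w eq1_mod_ndvd.
rewrite -[LHS]prednK ?expn_gt0 ?addn_gt0 // predn_exp -/S def_S /x add1n /=.
by rewrite expnSr; nia.
Qed.

Lemma expn_pexpn_1addn n u i : 0 < n -> ~~ (p %| u) ->
  exists2 w, (1 + p ^ n * u) ^ (p ^ i) = 1 + p ^ (n + i) * w & ~~ (p %| w).
Proof.
move=> n_gt0 p'u; elim: i => [|i [w def_w p'w]]; first by exists u; rewrite ?addn0.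
have [w' def_w' p'w'] := expn_prime_1addn (ltn_addr i n_gt0) p'w.
by exists w'; rewrite // expnSr expnM def_w def_w' addnS.
Qed.

Lemma powers_1addn_onto n u x : 0 < n -> ~~ (p %| u) -> x = 1 %[mod p ^ n] ->
  forall i, exists k, (1 + p ^ n * u) ^ k = x %[mod p ^ (n + i)].
Proof.
move=> n_gt0 p'u x1; elim=> [|i [k ak]]; first by exists 0; rewrite addn0 x1.
have [w def_w p'w] := expn_pexpn_1addn i n_gt0 p'u.
have p'ak : ~~ (p %| (1 + p ^ n * u) ^ k).
  by rewrite Euclid_dvdX // negb_and prime_ndvd_1addn.
have [j ajx] := powers_lift_step (ltn_addr i n_gt0) p'ak p'w ak.
by exists (k + p ^ i * j); rewrite addnS expnD expnM def_w.
Qed.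

End PrimeLifting.

Lemma cosetP p y m z : coset p y m z <-> y <= z /\ z = y %[mod p ^ m].
Proof.
split=> [[k ->]|[le_yz zy]]; first by rewrite leq_addr addnC mulnC modnMDl.
have : p ^ m %| z - y by rewrite -eqn_mod_dvd // zy.
by exists ((z - y) %/ p ^ m); rewrite mulnC divnK // subnKC.
Qed.

Lemma coset1P p n z : 1 < p -> 0 < n -> coset p 1 n z <-> z = 1 %[mod p ^ n].
Proof.
move=> p_gt1 n_gt0; rewrite cosetP; split=> [[] //|z1]; split=> //.
by apply: eq1_mod_gt0 z1; rewrite -(expn0 p) ltn_exp2l.
Qed.

Lemma Xle_coset p n m : n <= m -> Xle (coset p 1 n) (coset p 1 m).
Proof. by move=> le_nm z [k ->]; exists (p ^ (m - n) * k); rewrite mulnA -expnD subnKC. Qed.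

Lemma In_leq_sum_snd (l : list (nat * nat)) ym : In ym l -> ym.2 <= \sum_(y <- l) y.2.
Proof.
elim: l => [//|y l IH] /= [<-|/IH le_l]; rewrite big_cons; first exact: leq_addr.
exact: leq_trans le_l (leq_addl _ _).
Qed.

Lemma padic_closureS p S T :
  (forall z, S z -> T z) -> forall x, padic_closure p S x -> padic_closure p T x.
Proof.
move=> ST x [Nx clSx]; split=> // U oU Ux.
by have [s [Us /ST Ts]] := clSx U oU Ux; exists s.
Qed.

Lemma padic_closure_sub p S x : (forall s, S s -> NnotpN p s) -> S x -> padic_closure p S x.
Proof. by move=> SN Sx; split=> [|U _ Ux]; [exact: SN | exists x]. Qed.

(* The basic open sets x + p^m N_0 contain no number below x, hence [x <= s]. *)
Lemma padic_closureP p S x : (forall s, S s -> NnotpN p s) ->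
  padic_closure p S x <->
  NnotpN p x /\ forall M, exists s, [/\ S s, x <= s & s = x %[mod p ^ M]].
Proof.
move=> SN; split=> [[Nx clSx]|[Nx near_x]].
  split=> // M; pose U z := NnotpN p z /\ coset p x M.+1 z.
  have oU : padic_open p U.
    split=> [z [] //|z [Nz /cosetP[le_xz zx]]]; exists [:: (z, M.+1)].
    split; [|split].
    - by move=> ym [<-|[]] //; case: Nz.
    - by move=> ym [<-|[]] //; apply/cosetP.
    - move=> z' Nz' /(_ _ (or_introl erefl)) /cosetP[le_zz' z'z]; split=> //.
      by apply/cosetP; rewrite (leq_trans le_xz) // z'z.
  have Ux : U x by split=> //; apply/cosetP.
  have [s [[_ /cosetP[le_xs sx]] Ss]] := clSx U oU Ux.
  by exists s; split=> //; apply: eq_mod_expn_leq (leqnSn M) sx.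
split=> // U [_ oU] Ux; have [l [_ [lx lU]]] := oU x Ux.
have [s [Ss le_xs sx]] := near_x (\sum_(ym <- l) ym.2).
exists s; split=> //; apply: lU (SN s Ss) _ => ym l_ym.
have /cosetP[le_yx xy] := lx ym l_ym.
apply/cosetP; rewrite (leq_trans le_yx) //.
by rewrite (eq_mod_expn_leq (In_leq_sum_snd l_ym) sx).
Qed.

Lemma Xle_closure_powersX p a e : 0 < e ->
  Xle (padic_closure p (powers a)) (padic_closure p (powers (a ^ e))).
Proof.
move=> e_gt0; apply: padic_closureS => _ [k [k_gt0 ->]].
by exists (e * k); rewrite muln_gt0 e_gt0 expnM.
Qed.

Lemma Xp_closure_powers p a : NnotpN p a -> 1 < a -> Xp p (padic_closure p (powers a)).
Proof. by move=> Na a_gt1; exists a; split=> //; split=> // a1; rewrite a1 in a_gt1. Qed.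

Section ClosureOfPowers.

Variable p : nat.
Hypothesis p_pr : prime p.

Let p_gt0 : 0 < p := prime_gt0 p_pr.
Let p_gt1 : 1 < p := prime_gt1 p_pr.
Let pp_gt0 : 0 < p.-1.
Proof. by rewrite ltn_predRL. Qed.

Lemma powers_NnotpN a s : ~~ (p %| a) -> powers a s -> NnotpN p s.
Proof.
move=> p'a [k [_ ->]]; split; last by rewrite Euclid_dvdX // negb_and p'a.
by case: a p'a => [|a]; rewrite ?dvdn0 ?expn_gt0.
Qed.

Lemma closure_powers_self a : ~~ (p %| a) -> padic_closure p (powers a) a.
Proof. by move=> p'a; apply: padic_closure_sub => [s|]; [apply: powers_NnotpN | exists 1]. Qed.

Lemma closure_powersP a x : ~~ (p %| a) -> 1 < a ->
  padic_closure p (powers a) x <-> forall M, exists k, a ^ k = x %[mod p ^ M].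
Proof.
move=> p'a a_gt1; rewrite padic_closureP => [|s]; last exact: powers_NnotpN.
split=> [[_ near_x] M|ax]; first by have [_ [[k [_ ->]] _ sx]] := near_x M; exists k.
have Nx : NnotpN p x.
  have [k] := ax 1; rewrite expn1 => akx.
  have p'x : ~~ (p %| x) by rewrite /dvdn -akx -/(dvdn p _) Euclid_dvdX // negb_and p'a.
  by split=> //; rewrite lt0n; apply: contraNneq p'x => ->.
split=> // M; have [k akx] := ax M.
have co_a : coprime a (p ^ M) by rewrite coprime_sym coprimeXl // prime_coprime.
have [x_gt0 _] := Nx; set k' := k + x * totient (p ^ M).
have le_xk' : x <= k'.
  by rewrite (leq_trans _ (leq_addl _ _)) // leq_pmulr // totient_gt0 expn_gt0 p_gt0.
exists (a ^ k'); split; last by rewrite expn_totient_addn_mod.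
- by exists k'; rewrite (leq_trans x_gt0).
- exact: ltnW (leq_trans (ltn_expl x a_gt1) (leq_pexp2l (ltnW a_gt1) le_xk')).
Qed.

Lemma not_Xle_closure_powers_prime_pred a : ~~ (p %| a) -> 1 < a ->
  ~ Xle (padic_closure p (powers (a ^ p))) (padic_closure p (powers (a ^ p.-1))).
Proof.
move=> p'a a_gt1 le_b; set b := a ^ p.-1.
have b1 : b = 1 %[mod p] by apply: fermat_little_pred.
have b_gt0 : 0 < b := eq1_mod_gt0 p_gt1 b1.
set n := logn p b.-1.
have b1_gt0 : 0 < b.-1 by rewrite -subn1 subn_gt0 expn_gt1.
have n_gt0 : 0 < n by rewrite -pfactor_dvdn // expn1 -eqn1_mod_dvd // b1.
have bn : b = 1 %[mod p ^ n] by apply/eqP; rewrite eqn1_mod_dvd // pfactor_dvdnn.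
have bn1 : b != 1 %[mod p ^ n.+1].
  by rewrite eqn1_mod_dvd // pfactor_dvdn // ltnn.
have p'ap : ~~ (p %| a ^ p) by rewrite Euclid_dvdX // negb_and p'a.
have := le_b b (closure_powers_self (eq1_mod_ndvd p_gt1 b1)).
move/(closure_powersP _ p'ap (expn_gt1 a_gt1 p_gt0))/(_ n.+1) => [k].
rewrite -expnM mulnC expnM => akb; apply: (negP bn1); apply/eqP.
apply: (pth_power_eq1_mod p_pr n_gt0 akb bn).
by rewrite -expnM mulnC expnM -modnXm bn modnXm exp1n.
Qed.

Lemma not_Xle_closure_powers_pred_prime a : ~~ (p %| a) -> 1 < a -> a != 1 %[mod p] ->
  ~ Xle (padic_closure p (powers (a ^ p.-1))) (padic_closure p (powers (a ^ p))).
Proof.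
move=> p'a a_gt1 a_n1 le_ap; set b := a ^ p.-1.
have b1 : b = 1 %[mod p] by apply: fermat_little_pred.
have p'ap : ~~ (p %| a ^ p) by rewrite Euclid_dvdX // negb_and p'a.
have := le_ap _ (closure_powers_self p'ap).
move/(closure_powersP _ (eq1_mod_ndvd p_gt1 b1) (expn_gt1 a_gt1 pp_gt0))/(_ 1) => [k].
rewrite expn1 -modnXm b1 modnXm exp1n fermat_little // => a1.
by rewrite a1 eqxx in a_n1.
Qed.

Lemma closure_powers_not_up_chain a : NnotpN p a -> 1 < a -> a != 1 %[mod p] ->
  ~ up_chain_element (Xp p) Xle (padic_closure p (powers a)).
Proof.
move=> [_ p'a] a_gt1 a_n1 [_ chain].
have Xp_pow e : 0 < e -> Xp p (padic_closure p (powers (a ^ e))).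
  move=> e_gt0; apply: Xp_closure_powers; last exact: expn_gt1.
  by apply: powers_NnotpN p'a _; exists e.
have [] := chain _ _ (Xp_pow _ p_gt0) (Xp_pow _ pp_gt0)
  (Xle_closure_powersX (p := p) (a := a) p_gt0)
  (Xle_closure_powersX (p := p) (a := a) pp_gt0).
- exact: not_Xle_closure_powers_prime_pred.
- exact: not_Xle_closure_powers_pred_prime.
Qed.

Hypothesis p_odd : odd p.

Lemma closure_powers_1addn n u : 0 < n -> ~~ (p %| u) ->
  padic_closure p (powers (1 + p ^ n * u)) = coset p 1 n.
Proof.
move=> n_gt0 p'u; set a := 1 + p ^ n * u.
have a_gt1 : 1 < a.
  rewrite -[X in X < _]addn0 ltn_add2l muln_gt0 expn_gt0 p_gt0 lt0n.
  by apply: contraNneq p'u => ->.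
have a1 : a = 1 %[mod p ^ n] by rewrite /a addnC mulnC modnMDl.
apply: functional_extensionality => x; apply: propositional_extensionality.
rewrite closure_powersP ?prime_ndvd_1addn // coset1P //; split=> [ax|x1 M].
  by have [k <-] := ax n; rewrite -modnXm a1 modnXm exp1n.
have [k akx] := powers_1addn_onto p_pr p_odd n_gt0 p'u x1 M.
by exists k; apply: eq_mod_expn_leq (leq_addl n M) akx.
Qed.

Lemma closure_powers_eq1_mod a : 1 < a -> a = 1 %[mod p] ->
  exists2 n, 0 < n & padic_closure p (powers a) = coset p 1 n.
Proof.
move=> a_gt1 a1; have a_gt0 := ltnW a_gt1.
have a1_gt0 : 0 < a.-1 by rewrite -subn1 subn_gt0.
have [u co_pu def_a1] := pfactor_coprime p_pr a1_gt0.
have n_gt0 : 0 < logn p a.-1.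
  by rewrite -(pfactor_dvdn 1 p_pr a1_gt0) expn1 -(eqn1_mod_dvd _ a_gt0) a1.
have -> : a = 1 + p ^ logn p a.-1 * u by rewrite add1n mulnC -def_a1 prednK.
by exists (logn p a.-1); rewrite // closure_powers_1addn // -prime_coprime.
Qed.

Lemma Xp_coset n : 0 < n -> Xp p (coset p 1 n).
Proof.
move=> n_gt0; have pn_gt0 : 0 < p ^ n by rewrite expn_gt0 p_gt0.
exists (1 + p ^ n); split; last split.
- by split; rewrite ?addn_gt0 // -[p ^ n]muln1 prime_ndvd_1addn.
- by move: pn_gt0; lia.
- by rewrite -[p ^ n]muln1 closure_powers_1addn // dvdn1 neq_ltn p_gt1 orbT.
Qed.

Lemma Xp_Xle_coset n X : 0 < n -> Xp p X -> Xle (coset p 1 n) X ->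
  exists2 m, 0 < m & X = coset p 1 m.
Proof.
move=> n_gt0 [a [Na [a_neq1 ->]]] le_nX; have [_ p'a] := Na.
have a_gt1 := NnotpN_gt1 Na a_neq1.
have an : a = 1 %[mod p ^ n].
  by apply/(coset1P a p_gt1 n_gt0)/le_nX/closure_powers_self.
by apply: closure_powers_eq1_mod; rewrite // -(expn1 p) (eq_mod_expn_leq n_gt0 an).
Qed.

End ClosureOfPowers.

Theorem lemma4p5 (p : nat) (hp : prime p) (hodd : odd p) :
  (forall t : subset_nat,
     up_chain_element (Xp p) Xle t <-> exists n, 0 < n /\ t = coset p 1 n) /\
  (forall n m, 0 < n -> 0 < m ->
     Xle (coset p 1 n) (coset p 1 m) \/ Xle (coset p 1 m) (coset p 1 n)).
Proof.
have coset_total n m : Xle (coset p 1 n) (coset p 1 m) \/ Xle (coset p 1 m) (coset p 1 n).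
  by case: (leqP n m) => [le_nm|/ltnW le_mn]; [left|right]; apply: Xle_coset.
split=> [t|n m _ _]; last exact: coset_total.
split=> [[[a [Na [a_neq1 ->]]] chain]|[n [n_gt0 ->]]].
  have a_gt1 := NnotpN_gt1 Na a_neq1.
  have [/eqP a1|a_n1] := boolP (a == 1 %[mod p]).
    by have [n n_gt0 ->] := closure_powers_eq1_mod hp hodd a_gt1 a1; exists n.
  have not_chain := closure_powers_not_up_chain hp Na a_gt1 a_n1.
  by case: not_chain; split=> //; apply: Xp_closure_powers.
split=> [|X Y X_Xp Y_Xp le_nX le_nY]; first exact: Xp_coset.
have [m1 _ ->] := Xp_Xle_coset hp hodd n_gt0 X_Xp le_nX.
have [m2 _ ->] := Xp_Xle_coset hp hodd n_gt0 Y_Xp le_nY.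
exact: coset_total.
Qed.
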